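(* If $n$ is a prime number, or $n=4$, then there exists no u-p-cycle for $n$-permutations.
   Context: An $n$-permutation is a permutation of $\{1,\ldots,n\}$. For a word $w$ of distinct numbers, $\mathrm{red}(w)$ is obtained by replacing the $i$-th smallest letter by $i$. Let $\Diamond$ be a symbol not among the integers. A word $f=f_1\cdots f_n$ over the positive integers together with $\Diamond$, whose integer letters are pairwise distinct, covers an $n$-permutation $\pi$ if one can substitute real numbers for the occurrences of $\Diamond$ (independently) so that the resulting word has $n$ pairwise distinct entries and reduces to $\pi$; equivalently, $f_i<f_j\iff\pi_i<\pi_j$ for all positions $i,j$ holding integers. A u-p-cycle (universal partial cycle) for $n$-permutations is a cyclic word $u_1\cdots u_N$ with $N\geq n$ over this alphabet containing at least one $\Diamond$, indices read modulo $N$, such that each of its $N$ cyclic factors $u_iu_{i+1}\cdots u_{i+n-1}$ ($1\leq i\leq N$) has pairwise distinct integer letters and every $n$-permutation is covered by exactly one of these factors. *)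

From mathcomp Require Import all_boot all_order all_fingroup.
Set Implicit Arguments. Unset Strict Implicit. Unset Printing Implicit Defensive.

(* A letter is either an integer letter [Some k] or the hole symbol [None] (= Diamond). *)
Definition letter := option nat.
Notation Diamond := (@None nat).

Definition int_letters (f : seq letter) : seq nat := pmap id f.

(* The cyclic factor u_i u_{i+1} ... u_{i+n-1} (indices modulo N = size u), 0-based. *)
Definition cfactor (u : seq letter) (n i : nat) : seq letter :=
  [seq nth Diamond u ((i + j) %% size u) | j <- iota 0 n].

(* f covers the n-permutation p (p : 'S_n, position k |-> value p k, values 0..n-1,
   order-isomorphic to 1..n): f_i < f_j <-> p_i < p_j for all integer positions i,j. *)
Definition covers (n : nat) (f : seq letter) (p : 'S_n) : Prop :=
  size f = n /\
  forall (i j : 'I_n) (a b : nat),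
    nth Diamond f i = Some a -> nth Diamond f j = Some b ->
    (a < b) = (p i < p j).

(* u (a cyclic word, given by one linearization) is a u-p-cycle for n-permutations. *)
Definition upcycle (n : nat) (u : seq letter) : Prop :=
  [/\ n <= size u,
      Diamond \in u,
      (forall k, Some k \in u -> 0 < k),
      (forall i, i < size u -> uniq (int_letters (cfactor u n i)))
    & forall p : 'S_n, exists! i, i < size u /\ covers (cfactor u n i) p].

From mathcomp Require Import all_boot all_order all_fingroup zify.
Set Implicit Arguments. Unset Strict Implicit. Unset Printing Implicit Defensive.

(* If u_t is a hole, then every permutation whose first n - 1 entries follow the
   letters u_(t+1) .. u_(t+n-1) is covered by the window at t + 1: shifting back by
   one the window covering it yields a pattern that is also covered by the window
   at t, which starts with a hole.  Putting the last entry on the wrong side of a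
   letter then shows that u_(t+n) is a hole too.  Hence all N windows have the same
   number k >= 1 of holes, each covers n!/(n-k)! permutations, and N = (n-k)!.
   Holes also recur with period gcd(n, N), which exceeds 1 lest every position be
   a hole and N = 1.  For n prime this gives n | (n-k)!, which is impossible; for
   n = 4 it gives k = 1 and N = 6, so holes two apart put two holes in a window. *)

(* Permutations are handled through labelings [a : nat -> nat] with the same
   relative order, which survive re-indexing when windows are shifted. *)
Definition fits (w : seq letter) (a : nat -> nat) : Prop :=
  forall i j x y, nth Diamond w i = Some x -> nth Diamond w j = Some y ->
    (x < y) = (a i < a j).

Lemma nth_letter_size (w : seq letter) i x : nth Diamond w i = Some x -> i < size w.
Proof. by move=> E; rewrite ltnNge; apply/negP => /(nth_default Diamond); rewrite E. Qed.

Lemma nth_int_letters (w : seq letter) i x :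
  nth Diamond w i = Some x -> x \in int_letters w.
Proof.
by move=> E; rewrite mem_pmap map_id -E mem_nth // (nth_letter_size E).
Qed.

Lemma int_letters_nth_inj (w : seq letter) i j x : uniq (int_letters w) ->
  nth Diamond w i = Some x -> nth Diamond w j = Some x -> i = j.
Proof.
elim: w i j => [|c w IH] [|i] [|j] //= uw Ei Ej.
- by move: uw; rewrite Ei /= (nth_int_letters Ej).
- by move: uw; rewrite Ej /= (nth_int_letters Ei).
- by congr _.+1; apply: IH Ei Ej; case: c uw => [c /andP[]|].
Qed.

Lemma fits_take k w a : fits w a -> fits (take k w) a.
Proof.
have lt_k l z : nth Diamond (take k w) l = Some z -> l < k.
  by move=> Ez; have := nth_letter_size Ez; rewrite size_take_min; lia.
move=> fw i j x y Ex Ey; apply: fw.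
- by rewrite -Ex nth_take // (lt_k _ _ Ex).
- by rewrite -Ey nth_take // (lt_k _ _ Ey).
Qed.

Lemma fits_at_most_one_letter w a : size (int_letters w) <= 1 -> fits w a.
Proof.
move=> w1 i j x y Ex Ey.
have uw : uniq (int_letters w) by case: (int_letters w) w1 => [|? []].
have xy : x = y.
  move: (nth_int_letters Ex) (nth_int_letters Ey).
  by case: (int_letters w) w1 => [|z []] //= _; rewrite !inE => /eqP-> /eqP->.
by subst y; rewrite (int_letters_nth_inj uw Ex Ey) !ltnn.
Qed.

Lemma int_letters_rcons w c : int_letters (rcons w (Some c)) = rcons (int_letters w) c.
Proof. by rewrite /int_letters -!cats1 pmap_cat. Qed.

Definition canonical_label (w : seq letter) i :=
  if nth Diamond w i is Some x then x.*2.+1 else i.*2.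

Lemma canonical_label_fits w : fits w (canonical_label w).
Proof. by move=> i j x y Ex Ey; rewrite /canonical_label Ex Ey ltnS ltn_double. Qed.

Lemma canonical_label_inj w : uniq (int_letters w) -> injective (canonical_label w).
Proof.
rewrite /canonical_label => uw i j.
case Ei: (nth Diamond w i) => [x|]; case Ej: (nth Diamond w j) => [y|] E; try lia.
have xy : x = y by lia.
by subst y; apply: int_letters_nth_inj Ei Ej.
Qed.

Definition label_cons (m : nat) (a : nat -> nat) i :=
  if i is j.+1 then (a j).*2.+1 else m.*2.

Lemma label_cons_inj n m a : {in gtn n &, injective a} ->
  {in gtn n.+1 &, injective (label_cons m a)}.
Proof.
move=> ia [|i] [|j] //= ilt jlt E; try by move: (congr1 odd E); rewrite /= !odd_double.
by rewrite (ia i j) // (double_inj (succn_inj E)).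
Qed.

Lemma fits_hole_cons m w a : fits w a -> fits (Diamond :: w) (label_cons m a).
Proof. by move=> fw [|i] [|j] x y //= Ex Ey; rewrite ltnS ltn_double; apply: fw. Qed.

Lemma fits_letter_cons v w a : uniq (int_letters (Some v :: w)) -> fits w a ->
  exists m, fits (Some v :: w) (label_cons m a).
Proof.
rewrite /= => /andP[vw _] fw.
pose below (j : 'I_(size w)) := if nth Diamond w j is Some y then y < v else false.
pose M := \max_(j | below j) (a j).+1.
exists M.
have neq j y : nth Diamond w j = Some y -> y != v.
  by move=> Ey; apply: contraNneq vw => <-; apply: nth_int_letters Ey.
have lower j y : nth Diamond w j = Some y -> y < v -> a j < M.
  move=> Ey yv; have below_j : below (Ordinal (nth_letter_size Ey)) by rewrite /below /= Ey.
  exact: leq_bigmax_cond _ below_j.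
have upper j y : nth Diamond w j = Some y -> v < y -> M <= a j.
  move=> Ey vy; apply/bigmax_leqP => k; rewrite /below.
  case Ez: (nth _ w k) => [z|] // zv.
  by rewrite -(fw _ _ _ _ Ez Ey); lia.
move=> [|i] [|j] x y /= Ex Ey.
- by move: Ex Ey => [<-] [<-]; rewrite !ltnn.
- move: Ex => [<-]; have := neq _ _ Ey; case: (ltngtP y v) => yv // _.
  + by have := lower _ _ Ey yv; lia.
  + by have := upper _ _ Ey yv; lia.
- move: Ey => [<-]; have := neq _ _ Ex; case: (ltngtP x v) => xv // _.
  + by have := lower _ _ Ex xv; lia.
  + by have := upper _ _ Ex xv; lia.
- by rewrite ltnS ltn_double; apply: fw.
Qed.

Lemma perm_of_label n (a : nat -> nat) : {in gtn n &, injective a} ->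
  exists p : 'S_n, forall i j : 'I_n, (p i < p j) = (a i < a j).
Proof.
move=> ia; pose below (i : 'I_n) := [set j : 'I_n | a j < a i].
have below_lt i : #|below i| < n.
  rewrite -[n in _ < n]card_ord -cardsT; apply: proper_card; apply/properP.
  by split; [exact: subsetT | exists i; rewrite ?inE ?ltnn].
have below_mono (i j : 'I_n) : a i < a j -> #|below i| < #|below j|.
  move=> ij; apply: proper_card; apply/properP; split.
    by apply/subsetP => k; rewrite !inE => ki; apply: ltn_trans ij.
  by exists i; rewrite !inE ?ltnn.
pose rank i := Ordinal (below_lt i).
have rank_inj : injective rank.
  move=> i j /(congr1 val) /= E; apply/val_inj/(ia _ _ (ltn_ord i) (ltn_ord j)).
  case: (ltngtP (a i) (a j)) => [ij|ji|//].
  - by have := below_mono _ _ ij; rewrite E ltnn.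
  - by have := below_mono _ _ ji; rewrite E ltnn.
exists (perm rank_inj) => i j; rewrite !permE /=.
case: (ltngtP (a i) (a j)) => [ij|ji|E].
- exact: below_mono.
- by apply/negbTE; rewrite -leqNgt ltnW // below_mono.
- by rewrite (val_inj (ia _ _ (ltn_ord i) (ltn_ord j) E)) ltnn.
Qed.

Lemma covers_fits n w (a : nat -> nat) (p : 'S_n) : size w = n ->
  (forall i j : 'I_n, (p i < p j) = (a i < a j)) -> covers w p <-> fits w a.
Proof.
move=> sw pa; split=> [[_ cov] i j x y Ex Ey | fw].
  have := nth_letter_size Ex; have := nth_letter_size Ey; rewrite sw => jn in_.
  by rewrite (cov (Ordinal in_) (Ordinal jn) x y) // pa.
by split=> // i j x y Ex Ey; rewrite pa; apply: fw.
Qed.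

Definition coversb n (w : seq letter) (p : 'S_n) :=
  (size w == n) && [forall i : 'I_n, forall j : 'I_n,
    if (nth Diamond w i, nth Diamond w j) is (Some x, Some y)
    then (x < y) == (p i < p j) else true].

Lemma coversP n w (p : 'S_n) : reflect (covers w p) (coversb w p).
Proof.
apply: (iffP andP) => [[/eqP sw /forallP cov]|[sw cov]].
  split=> // i j x y Ex Ey.
  by move: (cov i) => /forallP /(_ j); rewrite Ex Ey => /eqP.
split; first by apply/eqP.
apply/forallP => i; apply/forallP => j.
by case Ex: (nth _ w i) => [x|] //; case Ey: (nth _ w j) => [y|] //; rewrite (cov i j x y).
Qed.

Lemma perm_above_first_mismatch n (p q : 'S_n) (v : 'I_n) :
  (forall v' : 'I_n, v' < v -> (p^-1)%g v' = (q^-1)%g v') ->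
  (p^-1)%g v != (q^-1)%g v -> v < p ((q^-1)%g v).
Proof.
move=> below ne; case: (ltngtP (p ((q^-1)%g v)) v) => [lt|//|/val_inj E].
- move: (below _ lt); rewrite permK => /(congr1 q); rewrite !permKV => vp.
  by move: lt; rewrite -vp ltnn.
- by move: ne; rewrite -{1}E permK eqxx.
Qed.

Section CoverCount.
Variables (n : nat) (w : seq letter).
Hypotheses (size_w : size w = n) (uniq_w : uniq (int_letters w)).

Local Notation hole := {i : 'I_n | nth Diamond w i == Diamond}.

Lemma card_hole : #|{: hole}| = #|[set i : 'I_n | nth Diamond w i == Diamond]|.
Proof. by rewrite card_sig; apply: eq_card => i; rewrite !inE. Qed.

(* At the least value [v] where [p^-1] and [q^-1] differ, both preimages of [v]
   are letters and each permutation maps the other's preimage above [v], so the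
   two letters would compare both ways. *)
Lemma covers_eq_on_holes (p q : 'S_n) : covers w p -> covers w q ->
  (forall d : hole, p (val d) = q (val d)) -> p = q.
Proof.
move=> [_ cp] [_ cq] pq.
have letter (r s : 'S_n) (v : 'I_n) : (forall d : hole, r (val d) = s (val d)) ->
    (r^-1)%g v != (s^-1)%g v -> exists y, nth Diamond w ((s^-1)%g v) = Some y.
  move=> rs ne; case E: (nth _ w _) => [y|]; first by exists y.
  have := rs (Sub ((s^-1)%g v) (introT eqP E)); rewrite /= permKV => rsv.
  by move: ne; rewrite -{1}rsv permK eqxx.
suff pq_inv : (p^-1 = q^-1)%g by rewrite -[p]invgK pq_inv invgK.
apply/permP => v0; apply/eqP/negPn/negP => ne0.
have [v ne vmin] :=
  arg_minnP (P := fun v => (p^-1)%g v != (q^-1)%g v) (fun v : 'I_n => val v) ne0.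
have eq_below (v' : 'I_n) : v' < v -> (p^-1)%g v' = (q^-1)%g v'.
  by move=> lt; apply/eqP; apply: contraTT lt => /vmin; rewrite -leqNgt.
have ne' : (q^-1)%g v != (p^-1)%g v by rewrite eq_sym.
have [x Ex] := letter p q v pq ne.
have [y Ey] := letter q p v (fun d => esym (pq d)) ne'.
have pv := perm_above_first_mismatch eq_below ne.
have qv := perm_above_first_mismatch (fun v' lt => esym (eq_below v' lt)) ne'.
have := cp _ _ _ _ Ey Ex; have := cq _ _ _ _ Ex Ey.
by rewrite !permKV pv qv; lia.
Qed.

Definition restrict_holes (p : 'S_n) : {ffun hole -> 'I_n} := [ffun d => p (val d)].

Lemma restrict_holes_inj : {in [set p | coversb w p] &, injective restrict_holes}.
Proof.
move=> p q; rewrite !inE => /coversP cp /coversP cq E.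
by apply: covers_eq_on_holes cp cq _ => d; move/ffunP/(_ d): E; rewrite !ffunE.
Qed.

Definition letter_rank (i : 'I_n) := #|[set j : 'I_n |
  if (nth Diamond w j, nth Diamond w i) is (Some y, Some x) then y < x else false]|.

Lemma letter_rank_mono (i j : 'I_n) x y :
  nth Diamond w i = Some x -> nth Diamond w j = Some y -> x < y ->
  letter_rank i < letter_rank j.
Proof.
move=> Ex Ey xy; apply: proper_card; apply/properP; split.
  apply/subsetP => k; rewrite !inE Ex Ey.
  by case: (nth _ w k) => // z zx; apply: ltn_trans xy.
by exists i; rewrite !inE Ex ?Ey ?ltnn.
Qed.

Lemma letter_rank_lt (i : 'I_n) x :
  nth Diamond w i = Some x -> letter_rank i < n - #|{: hole}|.
Proof.
move=> Ex; have -> : n - #|{: hole}| = #|[set j : 'I_n | nth Diamond w j != Diamond]|.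
  have -> : #|{: hole}| = #|[pred j : 'I_n | nth Diamond w j == Diamond]| by rewrite card_sig.
  rewrite -[n in n - _]card_ord -(cardC [pred j : 'I_n | nth Diamond w j == Diamond]) addKn.
  by apply: eq_card => j; rewrite !inE.
apply: proper_card; apply/properP; split.
  by apply/subsetP => k; rewrite !inE Ex; case: (nth _ w k).
by exists i; rewrite !inE Ex ?ltnn.
Qed.

Section Fill.
Variable f : {ffun hole -> 'I_n}.
Hypothesis f_inj : injective f.

Let free := [seq v <- enum 'I_n | v \notin codom f].

Let free_uniq : uniq free. Proof. exact/filter_uniq/enum_uniq. Qed.

Let free_sorted : sorted (fun u v : 'I_n => u < v) free.
Proof.
apply: sorted_filter; first by move=> ? ? ?; apply: ltn_trans.
by have := iota_ltn_sorted 0 n; rewrite -val_enum_ord sorted_map.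
Qed.

Let size_free : size free = n - #|{: hole}|.
Proof.
have /card_uniqP <- := free_uniq.
rewrite -(card_codom f_inj) -[n in n - _]card_ord -(cardC (mem (codom f))) addKn.
by apply: eq_card => v; rewrite mem_filter mem_enum andbT.
Qed.

Definition fill (i : 'I_n) : 'I_n :=
  if (insub i : option hole) is Some d then f d else nth i free (letter_rank i).

Let fill_hole (d : hole) : fill (val d) = f d.
Proof. by rewrite /fill valK. Qed.

Let fill_letter (i : 'I_n) x v0 :
  nth Diamond w i = Some x -> fill i = nth v0 free (letter_rank i).
Proof.
move=> Ex; rewrite /fill insubF ?Ex //; apply: set_nth_default.
by rewrite size_free (letter_rank_lt Ex).
Qed.

Lemma fill_inj : injective fill.
Proof.
have hole_or_letter (i : 'I_n) :
    (exists d : hole, i = val d) \/ exists x, nth Diamond w i = Some x.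
  case E: (nth _ w i) => [x|]; [by right; exists x | left].
  by exists (Sub i (introT eqP E)).
have free_letter (i : 'I_n) x : nth Diamond w i = Some x -> fill i \notin codom f.
  move=> Ex; have : fill i \in free.
    by rewrite (fill_letter i Ex) mem_nth // size_free (letter_rank_lt Ex).
  by rewrite mem_filter => /andP[].
move=> i j; case: (hole_or_letter i) => [[d ->]|[x Ex]];
  case: (hole_or_letter j) => [[e ->]|[y Ey]].
- by rewrite !fill_hole => /f_inj ->.
- by rewrite fill_hole => E; have := free_letter _ _ Ey; rewrite -E codom_f.
- by rewrite fill_hole => E; have := free_letter _ _ Ex; rewrite E codom_f.
- rewrite (fill_letter i Ex) (fill_letter i Ey) => /eqP.
  rewrite nth_uniq ?size_free ?(letter_rank_lt Ex) ?(letter_rank_lt Ey) // => /eqP rk.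
  case: (ltngtP x y) => [xy|yx|xy].
  + by have := letter_rank_mono Ex Ey xy; rewrite rk ltnn.
  + by have := letter_rank_mono Ey Ex yx; rewrite rk ltnn.
  + by subst y; apply/val_inj/(int_letters_nth_inj uniq_w Ex Ey).
Qed.

Definition fill_perm : 'S_n := perm fill_inj.

Lemma fill_perm_covers : covers w fill_perm.
Proof.
split=> // i j x y Ex Ey; rewrite !permE (fill_letter i Ex) (fill_letter i Ey).
have rk_size (k : 'I_n) z :
    nth Diamond w k = Some z -> letter_rank k \in [pred r | r < size free].
  by move=> Ez; rewrite inE size_free (letter_rank_lt Ez).
have ord_lt_trans : transitive (fun u v : 'I_n => u < v) by move=> ? ? ?; apply: ltn_trans.
have lt_nth := sorted_ltn_nth ord_lt_trans i free_sorted _ _ (rk_size _ _ Ex) (rk_size _ _ Ey).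
have gt_nth := sorted_ltn_nth ord_lt_trans i free_sorted _ _ (rk_size _ _ Ey) (rk_size _ _ Ex).
case: (ltngtP x y) => [xy|yx|xy].
- by rewrite lt_nth // (letter_rank_mono Ex Ey xy).
- by apply/esym/negbTE; rewrite -leqNgt ltnW // gt_nth // (letter_rank_mono Ey Ex yx).
- by subst y; rewrite (val_inj (int_letters_nth_inj uniq_w Ex Ey)) !ltnn.
Qed.

Lemma restrict_fill_perm : restrict_holes fill_perm = f.
Proof. by apply/ffunP => d; rewrite !ffunE permE fill_hole. Qed.

End Fill.

Lemma card_covers :
  #|[set p : 'S_n | coversb w p]| = n ^_ #|[set i : 'I_n | nth Diamond w i == Diamond]|.
Proof.
rewrite -(card_in_imset restrict_holes_inj) -card_hole -[n in n ^_ _]card_ord.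
rewrite -card_inj_ffuns; apply: eq_card => g; rewrite inE.
apply/imsetP/idP => [[p _ ->]|g_inj].
  by apply/injectiveP => d e; rewrite !ffunE => /perm_inj /val_inj.
exists (fill_perm (injectiveP _ g_inj)); last by rewrite restrict_fill_perm.
by rewrite inE; apply/coversP/fill_perm_covers.
Qed.
End CoverCount.

Definition cnth (u : seq letter) t := nth Diamond u (t %% size u).

Lemma cnthMDl u k t : cnth u (k * size u + t) = cnth u t.
Proof. by rewrite /cnth modnMDl. Qed.

Lemma size_cfactor u m t : size (cfactor u m t) = m.
Proof. by rewrite size_map size_iota. Qed.

Lemma nth_cfactor u m t j : j < m -> nth Diamond (cfactor u m t) j = cnth u (t + j).
Proof. by move=> jm; rewrite (nth_map 0) ?size_iota // nth_iota. Qed.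

Lemma cfactor_mod u m t : cfactor u m (t %% size u) = cfactor u m t.
Proof. by apply: eq_map => j; rewrite modnDml. Qed.

Lemma cfactorS u m t : cfactor u m.+1 t = cnth u t :: cfactor u m t.+1.
Proof.
rewrite /cfactor /= addn0 -[1]addn0 iotaDl -map_comp; congr (_ :: _).
by apply: eq_map => j /=; rewrite add1n addSnnS.
Qed.

Lemma take_cfactor u k m t : k <= m -> take k (cfactor u m t) = cfactor u k t.
Proof. by move=> km; rewrite -map_take take_iota (minn_idPl km). Qed.

Lemma cfactor_rcons u m t : cfactor u m.+1 t = rcons (cfactor u m t) (cnth u (t + m)).
Proof.
rewrite -{1}(take_size (cfactor u m.+1 t)) size_cfactor (take_nth Diamond) ?size_cfactor //.
by rewrite nth_cfactor // take_cfactor.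
Qed.

Lemma shift_mul (P : nat -> Prop) d : (forall t, P t -> P (t + d)) ->
  forall t m, P t -> P (t + m * d).
Proof.
move=> Pd t m Pt; elim: m => [|m IH]; first by rewrite addn0.
by rewrite mulSn addnCA addnC; apply: Pd.
Qed.

Section UPCycle.
Variables (n : nat) (u : seq letter).
Hypotheses (u_up : upcycle n u) (n_gt1 : 1 < n).
Local Notation N := (size u).
Local Notation window := (cfactor u n).

Let n_gt0 : 0 < n. Proof. exact: ltnW. Qed.

Lemma size_gt1 : 1 < N.
Proof. by case: u_up => nN _ _ _ _; apply: leq_trans nN. Qed.

Let N_gt0 : 0 < N. Proof. exact: ltnW size_gt1. Qed.

Lemma uniq_window t : uniq (int_letters (window t)).
Proof. by case: u_up => _ _ _ uw _; rewrite -cfactor_mod; apply/uw/ltn_pmod. Qed.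

Lemma window_fits_ex (a : nat -> nat) : {in gtn n &, injective a} ->
  exists s, fits (window s) a.
Proof.
move=> ia; have [p pa] := perm_of_label ia.
case: u_up => _ _ _ _ /(_ p) [s [[_ cov] _]].
by exists s; apply/(covers_fits (size_cfactor u n s) pa).
Qed.

Lemma window_fits_uniq (a : nat -> nat) s t : {in gtn n &, injective a} ->
  fits (window s) a -> fits (window t) a -> s = t %[mod N].
Proof.
move=> ia fs ft; have [p pa] := perm_of_label ia.
have cov r : fits (window r) a -> r %% N < N /\ covers (window (r %% N)) p.
  move=> fr; rewrite ltn_pmod // cfactor_mod; split=> //.
  exact/(covers_fits (size_cfactor _ _ _) pa).
case: u_up => _ _ _ _ /(_ p) [r [_ r_uniq]].
by rewrite -(r_uniq _ (cov s fs)) -(r_uniq _ (cov t ft)).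
Qed.

Let windowE t : window t = cnth u t :: cfactor u n.-1 t.+1.
Proof. by rewrite -cfactorS prednK. Qed.

Let window_succE t : window t.+1 = rcons (cfactor u n.-1 t.+1) (cnth u (t + n)).
Proof. by rewrite -[in LHS](prednK n_gt0) cfactor_rcons addSnnS prednK. Qed.

(* Extending the window [s] fitting [a] one step to the left gives a labeling
   fitting both window [s - 1] and window [t], so [s - 1 = t]. *)
Lemma fits_next_window t (a : nat -> nat) : cnth u t = Diamond ->
  {in gtn n &, injective a} -> fits (cfactor u n.-1 t.+1) a -> fits (window t.+1) a.
Proof.
move=> hole ia fa; have [s fs] := window_fits_ex ia.
pose s' := s + N.-1.
have s'S : s'.+1 = s %[mod N] by rewrite /s' -addnS prednK // modnDr.
have fs_tail : fits (cfactor u n.-1 s'.+1) a.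
  rewrite -cfactor_mod s'S cfactor_mod -(take_cfactor _ _ (leq_pred n)).
  exact: fits_take.
have [m fm] : exists m, fits (window s') (label_cons m a).
  move: (uniq_window s'); rewrite windowE.
  case: (cnth u s') => [v|] uw; first exact: fits_letter_cons.
  by exists 0; apply: fits_hole_cons.
have ft : fits (window t) (label_cons m a) by rewrite windowE hole; apply: fits_hole_cons.
have ia' : {in gtn n &, injective (label_cons m a)}.
  rewrite -(prednK n_gt0); apply: label_cons_inj.
  by apply: sub_in2 ia => i /=; rewrite !inE; lia.
have s't := window_fits_uniq ia' fm ft.
by rewrite -cfactor_mod -addn1 -modnDml -s't modnDml addn1 s'S cfactor_mod.
Qed.

Lemma window_prefix_has_letter t c : cnth u t = Diamond -> cnth u (t + n) = Some c ->
  int_letters (cfactor u n.-1 t.+1) != [::].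
Proof.
move=> hole last_c; apply/eqP => no_letter.
have ft : fits (window t) id.
  by apply: fits_at_most_one_letter; rewrite windowE hole /= no_letter.
have ft1 : fits (window t.+1) id.
  apply: fits_at_most_one_letter.
  by rewrite window_succE last_c int_letters_rcons no_letter.
have := window_fits_uniq (fun i j _ _ => id) ft ft1.
by move/eqP; rewrite -addn1 -{1}[t]addn0 eqn_modDl mod0n modn_small // size_gt1.
Qed.

Lemma hole_shift t : cnth u t = Diamond -> cnth u (t + n) = Diamond.
Proof.
move=> hole; case Ec: (cnth u (t + n)) => [c|] //; exfalso.
set w := cfactor u n.-1 t.+1.
have w_size : size w = n.-1 by rewrite size_cfactor.
have := uniq_window t.+1.
rewrite window_succE Ec int_letters_rcons rcons_uniq => /andP[c_notin uw].
have := window_prefix_has_letter hole Ec; rewrite -/w.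
case Ew: (int_letters w) => [//|e letters] _.
have /(nthP Diamond) [i0 i0w Ei0] : Some e \in w.
  by rewrite -[w]map_id -mem_pmap -/(int_letters w) Ew inE eqxx.
rewrite w_size in i0w.
have ce : c != e by apply: contraNneq c_notin => ->; rewrite Ew inE eqxx.
pose a0 := canonical_label w.
(* [a] follows the letters of [w] but puts position [n - 1] across [e] from [c]. *)
pose a i := if i < n.-1 then (a0 i).*2.+1 else (a0 i0 + (c < e)).*2.
have ia : {in gtn n &, injective a}.
  move=> i j /[!inE] /= i_lt j_lt; rewrite /a.
  case: ifP => ilt; case: ifP => jlt E; try lia.
  by apply: (canonical_label_inj uw); apply/double_inj/succn_inj.
have fa : fits w a.
  move=> i j x y Ex Ey; rewrite /a -w_size (nth_letter_size Ex) (nth_letter_size Ey).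
  by rewrite ltnS ltn_double; apply: canonical_label_fits.
have fa1 := fits_next_window hole ia fa; have := fa1 i0 n.-1 e c.
rewrite window_succE Ec !nth_rcons w_size i0w Ei0 ltnn eqxx /a i0w ltnn.
by move=> /(_ erefl erefl); move: ce; case: (ltngtP c e) => //= ce _; lia.
Qed.

Lemma hole_shiftE t : (cnth u (t + n) == Diamond) = (cnth u t == Diamond).
Proof.
apply/eqP/eqP => [hole|]; last exact: hole_shift.
have := shift_mul hole_shift N.-1 hole.
by rewrite -addnA -mulSn prednK // addnC mulnC cnthMDl.
Qed.

Lemma hole_shift_gcd t : cnth u t = Diamond -> cnth u (t + gcdn n N) = Diamond.
Proof.
case: (egcdnP N n_gt0) => km kN Ekm _ hole.
by have := shift_mul hole_shift km hole; rewrite Ekm addnCA cnthMDl.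
Qed.

Definition nholes t := #|[set j : 'I_n | cnth u (t + j) == Diamond]|.

Lemma nholesS t : nholes t.+1 = nholes t.
Proof.
rewrite /nholes -(card_preimset [set j : 'I_n | cnth u (t + j) == Diamond]
  (can_inj (@ordSK n))).
apply: eq_card => j; rewrite !inE /= addSnnS; case: (ltngtP j.+1 n) => [lt|gt|eq].
- by rewrite modn_small.
- by have := ltn_ord j; lia.
- by rewrite eq modnn addn0 hole_shiftE.
Qed.

Lemma nholes_const t : nholes t = nholes 0.
Proof. by elim: t => // t <-; rewrite nholesS. Qed.

Lemma card_window_covers t :
  #|[set p : 'S_n | coversb (window t) p]| = n ^_ nholes t.
Proof.
rewrite (card_covers (size_cfactor u n t) (uniq_window t)); congr (_ ^_ _).
by apply: eq_card => j; rewrite !inE nth_cfactor.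
Qed.

Lemma sum_card_window_covers :
  \sum_(t < N) #|[set p : 'S_n | coversb (window t) p]| = n`!.
Proof.
under eq_bigr => t _ do rewrite -sum1_card big_mkcond /=.
rewrite exchange_big /= -card_Sn -sum1_card; apply: eq_big => [p|p _]; first by rewrite inE.
case: u_up => _ _ _ _ /(_ p) [s [[sN cov] s_uniq]].
rewrite (bigD1 (Ordinal sN)) //= inE (introT (coversP _ _) cov) big1 // => t ts.
rewrite inE; case: coversP => // covt; case/eqP: ts.
by apply: val_inj; rewrite /= (s_uniq t (conj (ltn_ord t) covt)).
Qed.

Lemma size_upcycle : N = (n - nholes 0)`!.
Proof.
have k_le : nholes 0 <= n by rewrite /nholes -[n in _ <= n]card_ord max_card.
have := sum_card_window_covers.
under eq_bigr => t _ do rewrite card_window_covers nholes_const.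
rewrite sum_nat_const card_ord -(ffact_fact k_le) mulnC => /eqP.
by rewrite eqn_pmul2l ?ffact_gt0 // => /eqP.
Qed.

Lemma exists_hole : exists t, cnth u t = Diamond.
Proof.
case: u_up => _ /(nthP Diamond) [t tN Et] _ _ _.
by exists t; rewrite /cnth modn_small.
Qed.

Lemma nholes_gt0 : 0 < nholes 0.
Proof.
have [t hole] := exists_hole; rewrite -(nholes_const t).
by apply/card_gt0P; exists (Ordinal n_gt0); rewrite inE addn0 hole.
Qed.

Lemma gcdn_size_gt1 : 1 < gcdn n N.
Proof.
case: (ltngtP (gcdn n N) 1) => [g0|//|g1]; first by have := gcdn_gt0 n N; rewrite n_gt0; lia.
have [t hole] := exists_hole.
have all_holes : nholes 0 = n.
  rewrite -(nholes_const t) /nholes -[in RHS](card_ord n); apply: eq_card => j.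
  by rewrite inE -[j : nat]muln1 -g1 (shift_mul hole_shift_gcd).
by have := size_gt1; rewrite size_upcycle all_holes subnn fact0 ltnn.
Qed.
End UPCycle.

Lemma prime_dvd_fact_leq p m : prime p -> p %| m`! -> p <= m.
Proof.
move=> p_pr; elim: m => [|m IH]; first by rewrite dvdn1 => /eqP p1; rewrite p1 in p_pr.
rewrite factS Euclid_dvdM // => /orP[/dvdn_leq -> //|/IH]; exact: leqW.
Qed.

Theorem corollary3 (n : nat) :
  prime n \/ n = 4 -> forall u : seq letter, ~ upcycle n u.
Proof.
move=> n_cases u u_up.
have n_gt1 : 1 < n by case: n_cases => [/prime_gt1|->].
have sizeE := size_upcycle u_up n_gt1.
have k_gt0 := nholes_gt0 u_up n_gt1.
case: n_cases => [n_prime|n4].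
- have : n %| (n - nholes n u 0)`!.
    rewrite -sizeE -(negbK (n %| _)) -prime_coprime // /coprime.
    by rewrite neq_ltn (gcdn_size_gt1 u_up n_gt1) orbT.
  by move/(prime_dvd_fact_leq n_prime); lia.
- subst n; have k1 : nholes 4 u 0 = 1.
    case: u_up => n_size _ _ _ _; move: n_size k_gt0; rewrite sizeE.
    by case: (nholes 4 u 0) => [|[|[|[|k]]]] //; rewrite !subSS sub0n.
  have [t hole] := exists_hole u_up.
  have : 1 < nholes 4 u t.
    apply/card_gt1P; exists (Ordinal (isT : 0 < 4)), (Ordinal (isT : 2 < 4)).
    have := hole_shift_gcd u_up n_gt1 hole.
    by rewrite !inE /= addn0 hole sizeE k1 => ->.
  by rewrite nholes_const // k1.
Qed.
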